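(* Let $R$ be a ring such that whenever $a,b\in R$ satisfy $a+b=1$, there exist $r,s,e\in R$ with $1+ar\in eR$, $1+bs\in(1-e)R$ and $eR(1-e)\subseteq J(R)$. Then $R$ is feckly clean.
   Context: Rings are associative with identity, not necessarily commutative; $J(R)$ is the Jacobson radical. An element $u\in R$ is full if $RuR=R$. An element $a\in R$ is feckly clean if there exist $e\in R$ and a full element $u\in R$ with $a=e+u$ and $eR(1-e)\subseteq J(R)$; $R$ is feckly clean if every element is feckly clean. *)

From HB Require Import structures.
From mathcomp Require Import all_boot all_order all_algebra.
Set Implicit Arguments. Unset Strict Implicit. Unset Printing Implicit Defensive.
Import GRing.Theory.
Local Open Scope ring_scope.

Definition in_jacobson (R : pzRingType) (x : R) : Prop :=
  forall r : R, exists y : R, y * (1 - r * x) = 1.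

(* u is full iff the two-sided ideal RuR is R, i.e. 1 is a finite sum
   of elements a u b. *)
Definition full (R : pzRingType) (u : R) : Prop :=
  exists s : seq (R * R), \sum_(p <- s) p.1 * u * p.2 = 1.

Definition corner_in_J (R : pzRingType) (e : R) : Prop :=
  forall r : R, in_jacobson (e * r * (1 - e)).

Definition feckly_clean_elt (R : pzRingType) (a : R) : Prop :=
  exists e u : R, a = e + u /\ full u /\ corner_in_J e.

Definition feckly_clean (R : pzRingType) : Prop :=
  forall a : R, feckly_clean_elt a.

From HB Require Import structures.
From mathcomp Require Import all_boot all_order all_algebra.
Import GRing.Theory.
Set Implicit Arguments. Unset Strict Implicit.
Local Open Scope ring_scope.

(* Apply the hypothesis to [a] and [1 - a] and split [a = e + u] with
   [u := a - e].  The two given relations become [e x' - u r = 1] and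
   [(1 - e) y' + u s = 1]; substituting the second (multiplied by [e]) into
   the first shows that [1 - e (1 - e) t] lies in [RuR] for some [t].  As
   [e (1 - e)] is in [J(R)], that element is left invertible, so [1 \in RuR]. *)

Section FecklyClean.

Variable R : pzRingType.
Implicit Types c e r s t u x y z : R.

Lemma linv_one_subMC c t z : z * (1 - t * c) = 1 -> (1 + c * z * t) * (1 - c * t) = 1.
Proof.
move=> zK.
have swap : t * (1 - c * t) = (1 - t * c) * t.
  by rewrite mulrBr mulrBl mulr1 mul1r mulrA.
by rewrite mulrDl mul1r -(mulrA (c * z)) swap -(mulrA c z) (mulrA z) zK mul1r subrK.
Qed.

Lemma corner_linv e t : corner_in_J e -> exists w, w * (1 - e * (1 - e) * t) = 1.
Proof.
move=> eJ; have [z zK] := eJ 1 t; rewrite mulr1 in zK.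
by exists (1 + e * (1 - e) * z * t); apply: linv_one_subMC.
Qed.

Lemma full_of_linv u p q p' q' w : w * (p * u * q - p' * u * q') = 1 -> full u.
Proof.
move=> wK; exists [:: (w * p, q); (- (w * p'), q')].
by rewrite !big_cons big_nil /= addr0 -wK mulrBr !mulNr !mulrA.
Qed.

Lemma one_sub_corner_eq e u r s x y :
  e * x - u * r = 1 -> (1 - e) * y + u * s = 1 ->
  1 - e * (1 - e) * (y * x) = e * u * (s * x) - u * r.
Proof.
move=> Hx Hy.
have He : e = e * (1 - e) * y + e * u * s by rewrite -!mulrA -mulrDr Hy mulr1.
rewrite -{1}Hx {1}He mulrDl !mulrA.
by rewrite addrC -!addrA addKr.
Qed.

End FecklyClean.

Theorem corollary2p7 (R : pzRingType) :
  (forall a b : R, a + b = 1 ->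
     exists r s e : R,
       (exists x : R, 1 + a * r = e * x) /\
       (exists y : R, 1 + b * s = (1 - e) * y) /\
       corner_in_J e) ->
  feckly_clean R.
Proof.
move=> H a.
have [r [s [e [[x Hx] [[y Hy] eJ]]]]] := H a (1 - a) (subrKC a 1).
exists e, (a - e); split; first by rewrite addrC subrK.
split=> //.
have Ex : e * (x - r) - (a - e) * r = 1.
  by rewrite mulrBr mulrBl opprB addrA subrK -Hx addrK.
have Ey : (1 - e) * (y - s) + (a - e) * s = 1.
  rewrite mulrBr -Hy -[X in X + _]addrA -mulrBl -addrA -mulrDl.
  by rewrite opprB addrACA subrK addrAC subrr add0r subrr mul0r addr0.
have [w wK] := corner_linv ((y - s) * (x - r)) eJ.
rewrite (one_sub_corner_eq Ex Ey) -[X in X * r]mul1r in wK.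
exact: full_of_linv wK.
Qed.
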